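(* Let $L$ be a pretransitive logic, $k\le\omega$, and let $\mathfrak F=(W,(R_i)_{i<n})$ be the $k$-canonical frame of $L$. If $x\in W$ and $\varphi$ is a $k$-formula with $\varphi\in x$, then the set $R^*_{\mathfrak F}(x)\cap\{y\in W\mid \varphi\in y\}$ has a maximal element.
   Context: Logics are normal $n$-modal logics (sets of formulas over $p_0,p_1,\dots$, $\to,\bot$, $\Diamond_i$ ($i<n$), containing tautologies, $\Diamond_i(p\vee q)\to\Diamond_ip\vee\Diamond_iq$, $\neg\Diamond_i\bot$, closed under modus ponens, substitution and monotonicity). A $k$-formula uses only variables $p_j$, $j<k$. With $\Diamond^0\varphi=\varphi$, $\Diamond^{i+1}\varphi=\Diamond^i(\bigvee_{j<n}\Diamond_j\varphi)$, $\Diamond^{\le m}\varphi=\bigvee_{i\le m}\Diamond^i\varphi$, a logic is pretransitive if it contains $\Diamond^{m+1}p\to\Diamond^{\le m}p$ for some $m$. For a consistent logic $L$, the $k$-canonical frame has as points the maximal $L$-consistent sets of $k$-formulas, with $xR_iy$ iff $\Diamond_i\psi\in x$ for every $k$-formula $\psi\in y$. For a frame, $R_{\mathfrak F}=\bigcup_{i<n}R_i$, $R^*_{\mathfrak F}$ is its reflexive transitive closure, and $R^*_{\mathfrak F}(x)=\{y\mid xR^*_{\mathfrak F}y\}$. An element $x$ of a subset $V\subseteq W$ is a maximal element of $V$ if for all $y\in V$, $xR^*_{\mathfrak F}y$ implies $yR^*_{\mathfrak F}x$. *)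

From Stdlib Require Import Relations List.
From mathcomp Require Import all_boot.
Set Implicit Arguments. Unset Strict Implicit. Unset Printing Implicit Defensive.

Inductive form (n : nat) : Type :=
| Var : nat -> form n
| Bot : form n
| Imp : form n -> form n -> form n
| Dia : 'I_n -> form n -> form n.
Arguments Bot {n}.

Section Syntax.
Variable n : nat.
Definition Neg (a : form n) : form n := Imp a Bot.
Definition Top : form n := Neg Bot.
Definition Or (a b : form n) : form n := Imp (Neg a) b.
Definition And (a b : form n) : form n := Neg (Imp a (Neg b)).

Definition bigOr (l : seq (form n)) : form n := foldr Or Bot l.
Definition bigAnd (l : seq (form n)) : form n := foldr And Top l.

Fixpoint subst (s : nat -> form n) (f : form n) : form n :=
  match f with
  | Var j => s j
  | Bot => Bot
  | Imp a b => Imp (subst s a) (subst s b)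
  | Dia i a => Dia i (subst s a)
  end.

Fixpoint peval (v : form n -> bool) (f : form n) : bool :=
  match f with
  | Var _ => v f
  | Bot => false
  | Imp a b => (peval v a ==> peval v b)
  | Dia _ _ => v f
  end.
Definition tautology (f : form n) : Prop := forall v, peval v f = true.

Definition normal_logic (L : form n -> Prop) : Prop :=
  (forall f, tautology f -> L f) /\
      (forall i : 'I_n, L (Imp (Dia i (Or (Var n 0) (Var n 1)))
                             (Or (Dia i (Var n 0)) (Dia i (Var n 1))))) /\
      (forall i : 'I_n, L (Neg (Dia i Bot))) /\
      (forall a b, L (Imp a b) -> L a -> L b) /\
      (forall s f, L f -> L (subst s f)) /\
      (forall (i : 'I_n) a b, L (Imp a b) -> L (Imp (Dia i a) (Dia i b))).

Definition DiaAny (f : form n) : form n := bigOr [seq Dia j f | j <- enum 'I_n].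
Fixpoint DiaPow (m : nat) (f : form n) : form n :=
  match m with
  | 0 => f
  | m'.+1 => DiaPow m' (DiaAny f)
  end.
Definition DiaLe (m : nat) (f : form n) : form n :=
  bigOr [seq DiaPow i f | i <- iota 0 m.+1].

Definition pretransitive (L : form n -> Prop) : Prop :=
  exists m, L (Imp (DiaPow m.+1 (Var n 0)) (DiaLe m (Var n 0))).

Definition consistent_logic (L : form n -> Prop) : Prop := ~ L Bot.

Inductive natw : Type := Fin of nat | Omega.
Definition var_ok (k : natw) (j : nat) : Prop :=
  match k with Fin k' => j < k' | Omega => True end.

Fixpoint kform (k : natw) (f : form n) : Prop :=
  match f with
  | Var j => var_ok k j
  | Bot => True
  | Imp a b => kform k a /\ kform k b
  | Dia _ a => kform k a
  end.

Definition Lconsistent (L : form n -> Prop) (G : form n -> Prop) : Prop :=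
  forall l : seq (form n), List.Forall G l -> ~ L (Neg (bigAnd l)).

Definition maxcons (L : form n -> Prop) (k : natw) (G : form n -> Prop) : Prop :=
  [/\ (forall f, G f -> kform k f),
      Lconsistent L G &
      (forall f, kform k f -> ~ G f ->
         ~ Lconsistent L (fun g => G g \/ g = f))].

Definition cpoint (L : form n -> Prop) (k : natw) : Type :=
  {G : form n -> Prop | maxcons L k G}.

Definition crel (L : form n -> Prop) (k : natw) (i : 'I_n)
  (x y : cpoint L k) : Prop :=
  forall f, kform k f -> proj1_sig y f -> proj1_sig x (Dia i f).

Definition crel_any (L : form n -> Prop) (k : natw) (x y : cpoint L k) : Prop :=
  exists i : 'I_n, @crel L k i x y.

Definition crel_star (L : form n -> Prop) (k : natw) : relation (cpoint L k) :=
  clos_refl_trans (cpoint L k) (@crel_any L k).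

Definition max_elem (L : form n -> Prop) (k : natw) (V : cpoint L k -> Prop)
  (x : cpoint L k) : Prop :=
  V x /\ forall y, V y -> @crel_star L k x y -> @crel_star L k y x.
End Syntax.
Arguments crel {n} L k i x y.
Arguments crel_any {n} L k x y.
Arguments crel_star {n} L k _ _.
Arguments max_elem {n} L k V x.
Arguments cpoint {n} L k.

(** Let [M a] be [DiaLe m a], where [L] proves [DiaPow m.+1 p -> DiaLe m p]. Pretransitivity
    makes [M] idempotent, and in the canonical frame [x R* y] holds iff [M g] is in [x] for
    every [g] in [y]; the existence half follows from Lindenbaum's lemma and a pigeonhole over
    the finitely many disjuncts of [M] and of [DiaAny].
    Enumerate the formulas as [f_0, f_1, ...] and extend [[phi]] greedily by [~ M f_i]
    whenever [x] still [M]-reaches the conjunction of everything chosen so far. A point [y]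
    containing all chosen formulas with [x R* y] is maximal: if [y R* z], [x R* z] and [phi]
    is in [z], every chosen [~ M c] persists from [y] to [z]. So if some [g] in [y] had
    [~ M g] in [z], then at the stage enumerating [g] the chosen formulas together with
    [~ M g] all lie in [z], hence [x] [M]-reaches their conjunction, so [~ M g] was chosen
    and lies in [y], contradicting [g] in [y]. *)

From HB Require Import structures.
From Stdlib Require Import Relations.
From Stdlib Require Import Classical ClassicalEpsilon.
From Stdlib Require Import FunctionalExtensionality PropExtensionality ProofIrrelevance.
From mathcomp Require Import all_boot.
Set Implicit Arguments. Unset Strict Implicit. Unset Printing Implicit Defensive.

Fixpoint form_enc n (f : form n) : GenTree.tree nat :=
  match f with
  | Var j => GenTree.Leaf j
  | Bot => GenTree.Node 0 [::]
  | Imp a b => GenTree.Node 1 [:: form_enc a; form_enc b]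
  | Dia i a => GenTree.Node 2 [:: GenTree.Leaf (val i); form_enc a]
  end.

Fixpoint form_dec n (t : GenTree.tree nat) : option (form n) :=
  match t with
  | GenTree.Leaf j => Some (Var n j)
  | GenTree.Node 0 [::] => Some Bot
  | GenTree.Node 1 [:: a; b] =>
      if (form_dec n a, form_dec n b) is (Some a', Some b') then Some (Imp a' b') else None
  | GenTree.Node 2 [:: GenTree.Leaf j; a] =>
      if (insub j, form_dec n a) is (Some i, Some a') then Some (Dia i a') else None
  | _ => None
  end.

Lemma form_encK n : pcancel (@form_enc n) (form_dec n).
Proof. by elim=> [j| |a IHa b IHb|i a IH] //=; rewrite ?IHa ?IHb ?valK ?IH. Qed.

HB.instance Definition _ n := Countable.copy (form n) (pcan_type (@form_encK n)).

Section Lists.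
Variable T : eqType.
Implicit Types (P Q : T -> Prop) (s : seq T).

Lemma Forall_mem P s : List.Forall P s <-> {in s, forall x, P x}.
Proof.
elim: s => [|a s IH]; first by split=> // _; constructor.
rewrite List.Forall_cons_iff IH; split=> [[Pa Ps] x|Ps].
  by rewrite inE => /predU1P [->|/Ps].
by split=> [|x xs]; apply: Ps; rewrite inE ?eqxx ?xs ?orbT.
Qed.

Lemma forall_in_cat P s1 s2 :
  {in s1, forall x, P x} -> {in s2, forall x, P x} -> {in s1 ++ s2, forall x, P x}.
Proof. by move=> P1 P2 x; rewrite mem_cat => /orP [/P1|/P2]. Qed.

Lemma cover_split P Q s : {in s, forall x, P x \/ Q x} ->
  exists s1 s2, [/\ {in s1, forall x, P x}, {in s2, forall x, Q x} & {subset s <= s1 ++ s2}].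
Proof.
elim: s => [|a s IH] PQs; first by exists [::], [::].
have [s1 [s2 [P1 Q2 sub]]] : exists s1 s2,
    [/\ {in s1, forall x, P x}, {in s2, forall x, Q x} & {subset s <= s1 ++ s2}].
  by apply: IH => x xs; apply: PQs; rewrite inE xs orbT.
have [Pa|Qa] := PQs a (mem_head _ _).
- exists (a :: s1), s2; split=> // [x|x]; first by rewrite inE => /predU1P [->|/P1].
  by rewrite inE => /predU1P [->|/sub]; rewrite ?mem_head // cat_cons inE => ->; rewrite orbT.
- exists s1, (a :: s2); split=> // [x|x]; first by rewrite inE => /predU1P [->|/Q2].
  rewrite inE !mem_cat inE => /predU1P [->|/sub]; first by rewrite eqxx orbT.
  by rewrite mem_cat => /orP [->|->]; rewrite ?orbT.
Qed.

Lemma chain_bound (C : nat -> T -> Prop) : (forall i x, C i x -> C i.+1 x) ->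
  forall s, {in s, forall x, exists i, C i x} -> exists i, {in s, forall x, C i x}.
Proof.
move=> CS; have Cadd j i x : C i x -> C (j + i) x by elim: j => // j IH /IH /CS.
elim=> [|a s IH] Cs; first by exists 0.
have [i1 Ca] := Cs a (mem_head _ _).
have [i2 C2] : exists i, {in s, forall x, C i x}.
  by apply: IH => x xs; apply: Cs; rewrite inE xs orbT.
exists (i2 + i1) => x; rewrite inE => /predU1P [->|/C2]; first exact: Cadd.
by rewrite addnC; apply: Cadd.
Qed.

Lemma uniform_witness (I : eqType) (D : T -> Prop) (Q : I -> seq T -> Prop) (cs : seq I) :
  (forall q s1 s2, {in s1, forall x, D x} -> {in s2, forall x, D x} ->
     Q q (s1 ++ s2) -> Q q s1 /\ Q q s2) ->
  (forall s, {in s, forall x, D x} -> exists2 q, q \in cs & Q q s) ->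
  exists2 q, q \in cs & forall s, {in s, forall x, D x} -> Q q s.
Proof.
move=> Qcat; elim: cs => [|q cs IH] Qs.
  have nilD : {in [::], forall x, D x} by move=> x; rewrite in_nil.
  by have [] := Qs _ nilD.
have [Qq|] := classic (forall s, {in s, forall x, D x} -> Q q s).
  by exists q; rewrite ?mem_head.
move=> /not_all_ex_not [s0 nQ]; have [Ds0 nQs0] := imply_to_and _ _ nQ.
have [q' q'cs Qq'] : exists2 q', q' \in cs & forall s, {in s, forall x, D x} -> Q q' s.
  apply: IH => s Ds; have [q' + Qq'] := Qs _ (forall_in_cat Ds0 Ds).
  rewrite inE => /predU1P [Eq'|q'cs]; last by exists q'; case: (Qcat _ _ _ Ds0 Ds Qq').
  by subst q'; case: nQs0; case: (Qcat _ _ _ Ds0 Ds Qq').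
by exists q'; rewrite // inE q'cs orbT.
Qed.

End Lists.

Section Propositional.
Variable n : nat.
Implicit Types (v : form n -> bool) (a b : form n) (l : seq (form n)).

Lemma bigAnd_cons a l : bigAnd (a :: l) = And a (bigAnd l). Proof. by []. Qed.
Lemma bigOr_cons a l : bigOr (a :: l) = Or a (bigOr l). Proof. by []. Qed.

Lemma peval_Imp v a b : peval v (Imp a b) = peval v a ==> peval v b. Proof. by []. Qed.

Lemma peval_Neg v a : peval v (Neg a) = ~~ peval v a.
Proof. by rewrite peval_Imp implybF. Qed.

Lemma peval_Or v a b : peval v (Or a b) = peval v a || peval v b.
Proof. by rewrite peval_Imp peval_Neg implyNb. Qed.

Lemma peval_And v a b : peval v (And a b) = peval v a && peval v b.
Proof. by rewrite peval_Neg peval_Imp peval_Neg negb_imply negbK. Qed.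

Lemma peval_bigAnd v l : peval v (bigAnd l) = all (peval v) l.
Proof. by elim: l => // a l IH; rewrite bigAnd_cons peval_And IH. Qed.

Lemma peval_bigOr v l : peval v (bigOr l) = has (peval v) l.
Proof. by elim: l => // a l IH; rewrite bigOr_cons peval_Or IH. Qed.

Definition pevalE :=
  (peval_bigAnd, peval_bigOr, peval_And, peval_Or, peval_Neg, peval_Imp).

End Propositional.

Section Syntax.
Variable n : nat.
Implicit Types (a : form n) (l : seq (form n)).

Lemma DiaPowS j a : DiaPow j.+1 a = DiaAny (DiaPow j a).
Proof. by elim: j a => //= j IH a; rewrite -IH. Qed.

Lemma subst_Imp s a b : subst s (Imp a b) = Imp (subst s a) (subst s b).
Proof. by []. Qed.

Lemma subst_bigOr s l : subst s (bigOr l) = bigOr [seq subst s f | f <- l].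
Proof. by elim: l => //= a l <-. Qed.

Lemma subst_DiaPow s j a : subst s (DiaPow j a) = DiaPow j (subst s a).
Proof. by elim: j a => //= j IH a; rewrite IH /DiaAny subst_bigOr -map_comp. Qed.

Lemma subst_DiaLe s m a : subst s (DiaLe m a) = DiaLe m (subst s a).
Proof.
rewrite /DiaLe subst_bigOr -map_comp; congr bigOr.
by apply: eq_map => j /=; rewrite subst_DiaPow.
Qed.

Variable k : natw.

Lemma kform_Neg a : kform k a -> kform k (Neg a). Proof. by []. Qed.

Lemma kform_bigAnd l : {in l, forall g, kform k g} -> kform k (bigAnd l).
Proof.
elim: l => //= a l IH kl; have ka := kl a (mem_head _ _).
by do !split=> //; apply: IH => g gl; apply: kl; rewrite inE gl orbT.
Qed.

Lemma kform_bigOr l : {in l, forall g, kform k g} -> kform k (bigOr l).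
Proof.
elim: l => //= a l IH kl; have ka := kl a (mem_head _ _).
by do !split=> //; apply: IH => g gl; apply: kl; rewrite inE gl orbT.
Qed.

Lemma kform_DiaAny a : kform k a -> kform k (DiaAny a).
Proof. by move=> ka; apply: kform_bigOr => _ /mapP [i _ ->]. Qed.

Lemma kform_DiaPow j a : kform k a -> kform k (DiaPow j a).
Proof. by elim: j a => //= j IH a /kform_DiaAny /IH. Qed.

Lemma kform_DiaLe m a : kform k a -> kform k (DiaLe m a).
Proof. by move=> ka; apply: kform_bigOr => _ /mapP [j _ ->]; apply: kform_DiaPow. Qed.

End Syntax.

Section CanonicalFrame.
Variables (n : nat) (L : form n -> Prop) (k : natw).
Hypothesis HL : normal_logic L.
Local Notation F := (form n).
Local Notation P := (cpoint L k).
Implicit Types (a b c f g : F) (l : seq F).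

Lemma L_taut f : tautology f -> L f.
Proof. by case: HL => taut _; apply: taut. Qed.

Lemma L_MP a b : L (Imp a b) -> L a -> L b.
Proof. by case: HL => _ [_ [_ [mp _]]]; apply: mp. Qed.

Lemma L_subst s f : L f -> L (subst s f).
Proof. by case: HL => _ [_ [_ [_ [sub _]]]]; apply: sub. Qed.

Lemma L_Dia_mono i a b : L (Imp a b) -> L (Imp (Dia i a) (Dia i b)).
Proof. by case: HL => _ [_ [_ [_ [_ mono]]]]; apply: mono. Qed.

Lemma L_Dia_Bot i : L (Neg (Dia i Bot)).
Proof. by case: HL => _ [_ [DiaBot _]]. Qed.

Lemma L_Dia_Or i a b : L (Imp (Dia i (Or a b)) (Or (Dia i a) (Dia i b))).
Proof.
case: HL => _ [DiaOr _].
exact: (L_subst (fun j => if j is 0 then a else if j is 1 then b else Var n j) (DiaOr i)).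
Qed.

Lemma L_entails a b : (forall v, peval v a -> peval v b) -> L (Imp a b).
Proof. by move=> ab; apply: L_taut => v; rewrite peval_Imp; apply/implyP/ab. Qed.

Lemma L_consequence a b : (forall v, peval v a -> peval v b) -> L a -> L b.
Proof. by move/L_entails/L_MP. Qed.

Lemma L_consequence2 a b c :
  (forall v, peval v a -> peval v b -> peval v c) -> L a -> L b -> L c.
Proof.
move=> abc La; apply: L_MP; apply: L_MP La; apply: L_taut => v.
by rewrite !peval_Imp; apply/implyP => va; apply/implyP/abc.
Qed.

Lemma L_imp_trans a b c : L (Imp a b) -> L (Imp b c) -> L (Imp a c).
Proof.
apply: L_consequence2 => v; rewrite !peval_Imp => /implyP ab /implyP bc.
by apply/implyP => /ab/bc.
Qed.

Lemma L_bigOr_intro l g : g \in l -> L (Imp g (bigOr l)).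
Proof. by move=> gl; apply: L_entails => v vg; rewrite pevalE; apply/hasP; exists g. Qed.

Lemma L_bigOr_elim l g : {in l, forall f, L (Imp f g)} -> L (Imp (bigOr l) g).
Proof.
elim: l => [|a l IH] fg; first exact: L_entails.
have La := fg a (mem_head _ _).
have Ll : L (Imp (bigOr l) g) by apply: IH => f fl; apply: fg; rewrite inE fl orbT.
apply: L_consequence2 La Ll => v; rewrite bigOr_cons !pevalE.
by move=> /implyP ag /implyP lg; apply/implyP => /orP [/ag|/lg].
Qed.

Lemma L_Dia_bigOr i l : L (Imp (Dia i (bigOr l)) (bigOr [seq Dia i f | f <- l])).
Proof.
elim: l => [|a l IH]; first exact: L_Dia_Bot.
apply: L_imp_trans (L_Dia_Or i a (bigOr l)) _.
apply: L_consequence IH => v; rewrite [map _ _]/= bigOr_cons !pevalE => /implyP IHv.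
by apply/implyP => /orP [->|/IHv ->]; rewrite ?orbT.
Qed.

Lemma L_DiaAny_intro i a : L (Imp (Dia i a) (DiaAny a)).
Proof. by apply: L_bigOr_intro; apply: map_f; rewrite mem_enum. Qed.

Lemma L_DiaAny_mono a b : L (Imp a b) -> L (Imp (DiaAny a) (DiaAny b)).
Proof.
move=> ab; apply: L_bigOr_elim => _ /mapP [i _ ->].
exact: L_imp_trans (L_Dia_mono i ab) (L_DiaAny_intro i b).
Qed.

Lemma L_DiaPow_mono j a b : L (Imp a b) -> L (Imp (DiaPow j a) (DiaPow j b)).
Proof. by elim: j a b => //= j IH a b /L_DiaAny_mono /IH. Qed.

Lemma L_DiaLe_intro m j a : j <= m -> L (Imp (DiaPow j a) (DiaLe m a)).
Proof. by move=> jm; apply: L_bigOr_intro; apply/mapP; exists j; rewrite // mem_iota. Qed.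

Lemma L_DiaLe_refl m a : L (Imp a (DiaLe m a)).
Proof. exact: (@L_DiaLe_intro m 0). Qed.

Lemma L_DiaLe_mono m a b : L (Imp a b) -> L (Imp (DiaLe m a) (DiaLe m b)).
Proof.
move=> ab; apply: L_bigOr_elim => _ /mapP [j + ->].
rewrite mem_iota add0n ltnS => /andP [_ jm].
exact: L_imp_trans (L_DiaPow_mono j ab) (L_DiaLe_intro _ jm).
Qed.

Section MaximalConsistent.
Context {G : F -> Prop} (HG : maxcons L k G).

Lemma maxcons_kform f : G f -> kform k f.
Proof. by case: HG => kG _ _; apply: kG. Qed.

Lemma maxcons_consistent l : {in l, forall g, G g} -> ~ L (Neg (bigAnd l)).
Proof. by case: HG => _ cG _ /Forall_mem; apply: cG. Qed.

Lemma maxcons_refute f : kform k f -> ~ G f ->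
  exists2 l, {in l, forall g, G g} & L (Imp (bigAnd l) (Neg f)).
Proof.
case: HG => _ _ maxG kf nGf; apply: NNPP => noref.
apply: (maxG f kf nGf) => l /Forall_mem Gfl Ll; apply: noref.
exists [seq g <- l | g != f].
  move=> g; rewrite mem_filter => /andP [gf /Gfl [//|gEf]].
  by rewrite gEf eqxx in gf.
apply: L_consequence Ll => v; rewrite !pevalE => /allPn [g gl ng].
apply/implyP => vl; apply/implyP => vf; move: ng.
have [gEf|gf] := eqVneq g f; first by rewrite gEf vf.
by move/allP: vl => /(_ g); rewrite mem_filter gf gl => ->.
Qed.

Lemma maxcons_closed l f :
  {in l, forall g, G g} -> L (Imp (bigAnd l) f) -> kform k f -> G f.
Proof.
move=> Gl Llf kf; apply: NNPP => nGf.
have [l' Gl' Ll'] := maxcons_refute kf nGf.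
apply: (maxcons_consistent (forall_in_cat Gl Gl')).
apply: L_consequence2 Llf Ll' => v; rewrite !pevalE all_cat.
by move=> /implyP lf /implyP l'f; apply/negP => /andP [/lf vf /l'f]; rewrite vf.
Qed.

Lemma maxcons_MP a b : G a -> L (Imp a b) -> kform k b -> G b.
Proof.
move=> Ga Lab; apply: (@maxcons_closed [:: a]); first by move=> g; rewrite inE => /eqP ->.
by apply: L_consequence Lab => v; rewrite !pevalE /= andbT.
Qed.

Lemma maxcons_complete f : kform k f -> G f \/ G (Neg f).
Proof.
move=> kf; have [|nGf] := classic (G f); first by left.
by right; have [l Gl Ll] := maxcons_refute kf nGf; apply: maxcons_closed Ll _.
Qed.

Lemma maxcons_not_Neg f : G f -> ~ G (Neg f).
Proof.
move=> Gf GNf; apply: (@maxcons_consistent [:: f; Neg f]).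
  by move=> g; rewrite !inE => /orP [] /eqP ->.
by apply: L_taut => v; rewrite !pevalE /=; case: (peval v f).
Qed.

Lemma maxcons_bigAnd l : {in l, forall g, G g} -> G (bigAnd l).
Proof.
move=> Gl; apply: (maxcons_closed Gl); first exact: L_entails.
by apply: kform_bigAnd => g /Gl /maxcons_kform.
Qed.

Lemma maxcons_bigOr l :
  G (bigOr l) -> {in l, forall f, kform k f} -> exists2 f, f \in l & G f.
Proof.
move=> Gl kl; apply: NNPP => noG.
have GN f : f \in l -> G (Neg f).
  by move=> fl; have [Gf|//] := maxcons_complete (kl f fl); case: noG; exists f.
apply: (@maxcons_consistent (bigOr l :: [seq Neg f | f <- l])).
  by move=> g; rewrite inE => /predU1P [->|/mapP [f /GN + ->]].
apply: L_taut => v; rewrite bigAnd_cons !pevalE.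
apply/negP => /andP [/hasP [f fl vf] /allP /(_ (Neg f) (map_f _ fl))].
by rewrite peval_Neg vf.
Qed.

Lemma maxcons_bigAnd_cat (O : F -> F) l1 l2 :
  (forall a b, L (Imp a b) -> L (Imp (O a) (O b))) ->
  kform k (O (bigAnd l1)) -> kform k (O (bigAnd l2)) ->
  G (O (bigAnd (l1 ++ l2))) -> G (O (bigAnd l1)) /\ G (O (bigAnd l2)).
Proof.
move=> Omono k1 k2 G12; split; apply: (maxcons_MP G12) => //;
  by apply/Omono/L_entails => v; rewrite !pevalE all_cat => /andP [].
Qed.

End MaximalConsistent.

Lemma cpoint_sub_eq (x y : P) : (forall g, proj1_sig x g -> proj1_sig y g) -> x = y.
Proof.
case: x y => [X HX] [Y HY] /= XY.
have EXY : X = Y.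
  apply: functional_extensionality => g; apply: propositional_extensionality.
  split=> [/XY //|Yg]; have [//|XNg] := maxcons_complete HX (maxcons_kform HY Yg).
  by case: (maxcons_not_Neg HY Yg (XY _ XNg)).
by subst Y; congr exist; apply: proof_irrelevance.
Qed.

Section Lindenbaum.
Variable Gam : F -> Prop.

Fixpoint lindenbaum_chain i : F -> Prop :=
  if i is i'.+1 then fun g => lindenbaum_chain i' g \/
    [/\ unpickle i' = Some g, kform k g &
        Lconsistent L (fun h => lindenbaum_chain i' h \/ h = g)]
  else Gam.

Lemma lindenbaum_chain_kform i g :
  (forall g, Gam g -> kform k g) -> lindenbaum_chain i g -> kform k g.
Proof. by move=> kGam; elim: i g => [|i IH] g /= => [/kGam|[/IH|[]]]. Qed.

Lemma lindenbaum_chain_consistent i :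
  Lconsistent L Gam -> Lconsistent L (lindenbaum_chain i).
Proof.
move=> cGam; elim: i => [//|i IH] /= l Cl.
have [[g [Eg _ cg]]|noadd] :=
  classic (exists g, [/\ unpickle i = Some g, kform k g &
             Lconsistent L (fun h => lindenbaum_chain i h \/ h = g)]).
  apply: cg; apply: List.Forall_impl Cl => h [|[Eh _ _]]; first by left.
  by right; move: Eh; rewrite Eg => -[].
apply: IH; apply: List.Forall_impl Cl => h [//|[Eh kh ch]].
by case: noadd; exists h.
Qed.

Lemma lindenbaum : (forall g, Gam g -> kform k g) -> Lconsistent L Gam ->
  exists G, maxcons L k G /\ forall g, Gam g -> G g.
Proof.
move=> kGam cGam; exists (fun g => exists i, lindenbaum_chain i g).
split; last by move=> g Gg; exists 0.
split=> [f [i] | l /Forall_mem Cl | f kf nCf cCf].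
- exact: lindenbaum_chain_kform.
- have [i /Forall_mem Cil] :=
    chain_bound (fun i g (Cig : lindenbaum_chain i g) => or_introl Cig) Cl.
  exact: lindenbaum_chain_consistent Cil.
- apply: nCf; exists (pickle f).+1; right; split=> //; first exact: pickleK.
  move=> l Cl; apply: cCf; apply: List.Forall_impl Cl => g [Cg|->]; last by right.
  by left; exists (pickle f).
Qed.

End Lindenbaum.

Lemma crel_exists (x : P) i (D : F -> Prop) :
  (forall g, D g -> kform k g) ->
  (forall l, {in l, forall g, D g} -> proj1_sig x (Dia i (bigAnd l))) ->
  exists2 y : P, (forall g, D g -> proj1_sig y g) & crel L k i x y.
Proof.
case: x => X HX /= kD DX.
pose Box g := kform k g /\ X (Neg (Dia i (Neg g))).
have kDBox g : D g \/ Box g -> kform k g by move=> [/kD|[]].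
have cDBox : Lconsistent L (fun g => D g \/ Box g).
  move=> l /Forall_mem DBl Ll.
  have [l1 [l2 [Dl1 Bl2 sub]]] := cover_split DBl.
  have kl2 g : g \in l2 -> kform k g by move=> /Bl2 [].
  have Ll1 : L (Imp (bigAnd l1) (bigOr [seq Neg g | g <- l2])).
    apply: L_consequence Ll => v; rewrite !pevalE => /negP nvl.
    apply/implyP => vl1; apply/negPn/negP => /hasPn nvl2; apply: nvl.
    apply/allP => g /sub; rewrite mem_cat => /orP [/(allP vl1) //|gl2].
    by have := nvl2 _ (map_f _ gl2); rewrite peval_Neg negbK.
  have XDia : X (bigOr [seq Dia i f | f <- [seq Neg g | g <- l2]]).
    apply: (maxcons_MP HX (DX _ Dl1) (L_imp_trans (L_Dia_mono i Ll1) (L_Dia_bigOr _ _))).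
    by apply: kform_bigOr => _ /mapP [_ /mapP [g /kl2 kg ->] ->].
  have [|_ /mapP [_ /mapP [g gl2 ->] ->] XDg] := maxcons_bigOr HX XDia.
    by move=> _ /mapP [_ /mapP [g /kl2 kg ->] ->].
  by have [_ XNDg] := Bl2 g gl2; apply: maxcons_not_Neg XDg XNDg.
have [Y [HY DBY]] := lindenbaum kDBox cDBox.
exists (exist _ Y HY) => [g Dg|f kf /= Yf]; first by apply: DBY; left.
have [//|XNDf] := maxcons_complete HX (kf : kform k (Dia i f)).
case: (maxcons_not_Neg HY Yf); apply: DBY; right; split=> //.
apply: (maxcons_MP HX XNDf); last by do !split.
have LNNf : L (Imp (Dia i (Neg (Neg f))) (Dia i f)).
  by apply: L_Dia_mono; apply: L_entails => v; rewrite !pevalE negbK.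
by apply: L_consequence LNNf => v; rewrite !pevalE => /implyP DNNf; apply/implyP/contra.
Qed.

Lemma L_DiaPow_bigAnd_gather j (D : F -> Prop) l' :
  {in l', forall g, exists2 l, {in l, forall h, D h} & g = DiaPow j (bigAnd l)} ->
  exists2 l, {in l, forall h, D h} & L (Imp (DiaPow j (bigAnd l)) (bigAnd l')).
Proof.
elim: l' => [|g l' IH] Dl'.
  by exists [::] => [h|]; rewrite ?in_nil //; apply: L_entails => v; rewrite !pevalE.
have [l0 Dl0 ->] := Dl' g (mem_head _ _).
have [l1 Dl1 Ll1] :
    exists2 l, {in l, forall h, D h} & L (Imp (DiaPow j (bigAnd l)) (bigAnd l')).
  by apply: IH => h hl'; apply: Dl'; rewrite inE hl' orbT.
exists (l0 ++ l1); first exact: forall_in_cat.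
have Lcat_l : L (Imp (DiaPow j (bigAnd (l0 ++ l1))) (DiaPow j (bigAnd l0))).
  by apply/L_DiaPow_mono/L_entails => v; rewrite !pevalE all_cat => /andP [].
have Lcat_r : L (Imp (DiaPow j (bigAnd (l0 ++ l1))) (bigAnd l')).
  apply: L_imp_trans _ Ll1; apply/L_DiaPow_mono/L_entails => v.
  by rewrite !pevalE all_cat => /andP [].
apply: L_consequence2 Lcat_l Lcat_r => v; rewrite bigAnd_cons !pevalE.
by move=> /implyP vl0 /implyP vl1; apply/implyP => vl; rewrite vl0 ?vl1.
Qed.

Lemma crel_star_exists_DiaPow j (x : P) (D : F -> Prop) :
  (forall g, D g -> kform k g) ->
  (forall l, {in l, forall g, D g} -> proj1_sig x (DiaPow j (bigAnd l))) ->
  exists2 y : P, (forall g, D g -> proj1_sig y g) & crel_star L k x y.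
Proof.
elim: j x => [|j IH] x kD Dx.
  exists x => [g Dg|]; last exact: rt_refl.
  have Dg1 : {in [:: g], forall h, D h} by move=> h; rewrite inE => /eqP ->.
  apply: (maxcons_MP (proj2_sig x) (Dx _ Dg1)); last exact: kD.
  by apply: L_entails => v; rewrite !pevalE /= andbT.
have kDia l : {in l, forall g, D g} -> kform k (DiaPow j (bigAnd l)).
  by move=> Dl; apply/kform_DiaPow/kform_bigAnd => g /Dl /kD.
have Dxi l : {in l, forall g, D g} ->
    exists2 i, i \in enum 'I_n & proj1_sig x (Dia i (DiaPow j (bigAnd l))).
  move=> Dl; have := Dx l Dl; rewrite DiaPowS => /(maxcons_bigOr (proj2_sig x)).
  case=> [_ /mapP [i _ ->]|_ /mapP [i ii ->] xi]; first exact: kDia.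
  by exists i.
have Dxi_cat i l1 l2 : {in l1, forall g, D g} -> {in l2, forall g, D g} ->
    proj1_sig x (Dia i (DiaPow j (bigAnd (l1 ++ l2)))) ->
    proj1_sig x (Dia i (DiaPow j (bigAnd l1))) /\ proj1_sig x (Dia i (DiaPow j (bigAnd l2))).
  move=> Dl1 Dl2; apply: (maxcons_bigAnd_cat (O := fun a => Dia i (DiaPow j a)) (proj2_sig x)
    _ (kDia _ Dl1) (kDia _ Dl2)).
  by move=> a b ab; apply/L_Dia_mono/L_DiaPow_mono.
have [i _ Dxi_unif] := uniform_witness Dxi_cat Dxi.
pose D' g := exists2 l, {in l, forall h, D h} & g = DiaPow j (bigAnd l).
have [z D'z xz] : exists2 z : P, (forall g, D' g -> proj1_sig z g) & crel L k i x z.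
  apply: crel_exists => [_ [l Dl ->]|l' D'l']; first exact: kDia.
  have [l Dl Ll] := L_DiaPow_bigAnd_gather D'l'.
  apply: (maxcons_MP (proj2_sig x) (Dxi_unif _ Dl) (L_Dia_mono i Ll)).
  by apply: kform_bigAnd => _ /D'l' [l0 Dl0 ->]; apply: kDia.
have [y Dy zy] := IH z kD (fun l Dl => D'z _ (ex_intro2 _ _ l Dl erefl)).
by exists y => //; apply: rt_trans zy; apply: rt_step; exists i.
Qed.

Section Pretransitive.
Variable m : nat.
Hypothesis Hm : L (Imp (DiaPow m.+1 (Var n 0)) (DiaLe m (Var n 0))).
Local Notation M := (DiaLe m).

Lemma L_pretransitive a : L (Imp (DiaPow m.+1 a) (M a)).
Proof.
have := L_subst (fun j => if j is 0 then a else Var n j) Hm.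
by rewrite subst_Imp subst_DiaPow subst_DiaLe.
Qed.

Lemma L_Dia_DiaLe i a : L (Imp (Dia i (M a)) (M a)).
Proof.
apply: L_imp_trans (L_Dia_bigOr i _) _.
apply: L_bigOr_elim => _ /mapP [_ /mapP [j + ->] ->].
rewrite mem_iota add0n ltnS => /andP [_ jm].
apply: L_imp_trans (L_DiaAny_intro i _) _; rewrite -DiaPowS.
move: jm; rewrite leq_eqVlt => /orP [/eqP ->|]; first exact: L_pretransitive.
exact: L_DiaLe_intro.
Qed.

Lemma L_DiaPow_DiaLe j a : L (Imp (DiaPow j (M a)) (M a)).
Proof.
elim: j => [|j IH]; first exact: L_entails.
apply: L_imp_trans _ IH => /=; apply: L_DiaPow_mono.
by apply: L_bigOr_elim => _ /mapP [i _ ->]; apply: L_Dia_DiaLe.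
Qed.

Lemma L_DiaLe_idem a : L (Imp (M (M a)) (M a)).
Proof. by apply: L_bigOr_elim => _ /mapP [j _ ->]; apply: L_DiaPow_DiaLe. Qed.

Lemma crel_star_exists (x : P) (D : F -> Prop) :
  (forall g, D g -> kform k g) ->
  (forall l, {in l, forall g, D g} -> proj1_sig x (M (bigAnd l))) ->
  exists2 y : P, (forall g, D g -> proj1_sig y g) & crel_star L k x y.
Proof.
move=> kD Dx.
have kPow j l : {in l, forall g, D g} -> kform k (DiaPow j (bigAnd l)).
  by move=> Dl; apply/kform_DiaPow/kform_bigAnd => g /Dl /kD.
have Dxj l : {in l, forall g, D g} ->
    exists2 j, j \in iota 0 m.+1 & proj1_sig x (DiaPow j (bigAnd l)).
  move=> Dl; have /(maxcons_bigOr (proj2_sig x)) := Dx l Dl.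
  case=> [_ /mapP [j _ ->]|_ /mapP [j jm ->] xj]; first exact: kPow.
  by exists j.
have Dxj_cat j l1 l2 : {in l1, forall g, D g} -> {in l2, forall g, D g} ->
    proj1_sig x (DiaPow j (bigAnd (l1 ++ l2))) ->
    proj1_sig x (DiaPow j (bigAnd l1)) /\ proj1_sig x (DiaPow j (bigAnd l2)).
  move=> Dl1 Dl2; apply: (maxcons_bigAnd_cat (O := DiaPow j) (proj2_sig x)
    _ (kPow _ _ Dl1) (kPow _ _ Dl2)).
  exact: L_DiaPow_mono.
have [j _ Dxj_unif] := uniform_witness Dxj_cat Dxj.
exact: crel_star_exists_DiaPow Dxj_unif.
Qed.

Lemma crel_star_DiaLe (x y : P) g :
  crel_star L k x y -> kform k g -> proj1_sig y g -> proj1_sig x (M g).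
Proof.
move=> xy; elim: xy g => {x y} [x y [i xy]|x|x y z _ IHxy _ IHyz] g kg yg;
  have kMg := kform_DiaLe m kg.
- apply: (maxcons_MP (proj2_sig x) (xy _ kMg _) (L_Dia_DiaLe i g) kMg).
  exact: (maxcons_MP (proj2_sig y) yg (L_DiaLe_refl m g) kMg).
- exact: (maxcons_MP (proj2_sig x) yg (L_DiaLe_refl m g) kMg).
- exact: (maxcons_MP (proj2_sig x) (IHxy _ kMg (IHyz g kg yg)) (L_DiaLe_idem g) kMg).
Qed.

Lemma crel_starP (x y : P) :
  crel_star L k x y <-> forall g, kform k g -> proj1_sig y g -> proj1_sig x (M g).
Proof.
split=> [xy g|yx]; first exact: crel_star_DiaLe.
have [|w yw xw] := @crel_star_exists x (proj1_sig y) (maxcons_kform (proj2_sig y)).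
  move=> l yl; have ybl := maxcons_bigAnd (proj2_sig y) yl.
  exact: yx (maxcons_kform (proj2_sig y) ybl) ybl.
by rewrite (cpoint_sub_eq yw).
Qed.

Lemma crel_star_Neg_DiaLe (y z : P) c : crel_star L k y z -> kform k c ->
  proj1_sig y (Neg (M c)) -> proj1_sig z (Neg (M c)).
Proof.
move=> yz kc yN; have kMc := kform_DiaLe m kc.
have [zMc|//] := maxcons_complete (proj2_sig z) kMc.
case: (maxcons_not_Neg (proj2_sig y) _ yN).
exact: (maxcons_MP (proj2_sig y) (crel_star_DiaLe yz kMc zMc) (L_DiaLe_idem c) kMc).
Qed.

Section MaximalElement.
Variables (x : P) (phi : F).
Hypotheses (kphi : kform k phi) (xphi : proj1_sig x phi).

Definition greedy_step A f :=
  if excluded_middle_informative (kform k f /\ proj1_sig x (M (bigAnd (rcons A (Neg (M f))))))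
  then rcons A (Neg (M f)) else A.

Fixpoint greedy i : seq F :=
  if i is i'.+1 then
    if unpickle i' is Some f then greedy_step (greedy i') f else greedy i'
  else [:: phi].

Lemma greedy_reachable i : proj1_sig x (M (bigAnd (greedy i))).
Proof.
elim: i => [|i IH].
  apply: (maxcons_MP (proj2_sig x) xphi).
    by apply: L_imp_trans (L_DiaLe_refl m _); apply: L_entails => v; rewrite !pevalE /= andbT.
  by apply: kform_DiaLe; apply: kform_bigAnd => g; rewrite inE => /eqP ->.
rewrite /=; case: (unpickle i) => [f|//]; rewrite /greedy_step.
by case: excluded_middle_informative => [[]|].
Qed.

Lemma greedy_mono i g : g \in greedy i -> g \in greedy i.+1.
Proof.
rewrite /=; case: (unpickle i) => [f|//]; rewrite /greedy_step.
by move=> gi; case: excluded_middle_informative => [? /=|//]; rewrite mem_rcons inE gi orbT.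
Qed.

Lemma greedy_shape i g :
  g \in greedy i -> g = phi \/ exists2 c, kform k c & g = Neg (M c).
Proof.
elim: i g => [|i IH] g /=; first by rewrite inE => /eqP ->; left.
case: (unpickle i) => [f|/IH //]; rewrite /greedy_step.
case: excluded_middle_informative => [[kf ?]|?] /=; last exact: IH.
by rewrite mem_rcons inE => /predU1P [->|/IH //]; right; exists f.
Qed.

Lemma greedy_pickle f : Neg (M f) \in greedy (pickle f).+1 \/
  ~ (kform k f /\ proj1_sig x (M (bigAnd (rcons (greedy (pickle f)) (Neg (M f)))))).
Proof.
rewrite /= pickleK /greedy_step.
by case: excluded_middle_informative => [?|?]; [left; rewrite /= mem_rcons mem_head|right].
Qed.

Definition greedy_limit g := exists i, g \in greedy i.

Lemma greedy_limit_kform g : greedy_limit g -> kform k g.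
Proof. by move=> [i /greedy_shape [->|[c kc ->]]] //; apply/kform_Neg/kform_DiaLe. Qed.

Lemma greedy_limit_reachable l :
  {in l, forall g, greedy_limit g} -> proj1_sig x (M (bigAnd l)).
Proof.
move=> Gl; have [i li] := chain_bound greedy_mono Gl.
apply: (maxcons_MP (proj2_sig x) (greedy_reachable i)); last first.
  by apply: kform_DiaLe; apply: kform_bigAnd => g /li gi; apply: greedy_limit_kform; exists i.
apply/L_DiaLe_mono/L_entails => v; rewrite !pevalE => /allP vA.
by apply/allP => g /li /vA.
Qed.

Lemma greedy_max_elem :
  exists y : P, max_elem L k (fun z : P => crel_star L k x z /\ proj1_sig z phi) y.
Proof.
have [y Dy xy] := crel_star_exists greedy_limit_kform greedy_limit_reachable.
exists y; split=> [|z [xz zphi] yz].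
  by split=> //; apply: Dy; exists 0; rewrite mem_head.
apply/crel_starP => psi kpsi ypsi.
have kMpsi := kform_DiaLe m kpsi.
have [//|zN] := maxcons_complete (proj2_sig z) kMpsi.
have [inA|] := greedy_pickle psi.
  have yMpsi := maxcons_MP (proj2_sig y) ypsi (L_DiaLe_refl m psi) kMpsi.
  by case: (maxcons_not_Neg (proj2_sig y) yMpsi); apply: Dy; exists (pickle psi).+1.
case; split=> //; set A := rcons _ _.
have zA : {in A, forall g, proj1_sig z g}.
  move=> g; rewrite mem_rcons inE => /predU1P [->//|gA].
  have [->//|[c kc Eg]] := greedy_shape gA; rewrite Eg.
  by apply: crel_star_Neg_DiaLe yz kc _; rewrite -Eg; apply: Dy; exists (pickle psi).
have zbA := maxcons_bigAnd (proj2_sig z) zA.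
exact: crel_star_DiaLe xz (maxcons_kform (proj2_sig z) zbA) zbA.
Qed.

End MaximalElement.
End Pretransitive.
End CanonicalFrame.

Theorem proposition3p2 (n : nat) (L : form n -> Prop)
  (HL : normal_logic L) (Hcons : consistent_logic L) (Hpre : pretransitive L)
  (k : natw) (x : cpoint L k) (phi : form n)
  (Hphi : kform k phi) (Hx : proj1_sig x phi) :
  exists y : cpoint L k,
    max_elem L k (fun z : cpoint L k => crel_star L k x z /\ proj1_sig z phi) y.
Proof.
have [m Hm] := Hpre.
exact: (greedy_max_elem HL Hm Hphi Hx).
Qed.
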